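(* Let $\mathscr{H}$ be a finite-dimensional complex Hilbert space and let $A=\{a_k\}_{k=1}^{m}$ and $B=\{b_j\}_{j=1}^{n}$ be frames of $\mathscr{H}$, where $A$ has lower and upper frame bounds $\alpha_1,\alpha_2$ and $B$ has lower and upper frame bounds $\beta_1,\beta_2$. Let $S\subseteq\{1,\dots,m\}$ and $T\subseteq\{1,\dots,n\}$ satisfy $$|S|\,|T|\,M(A^*,B)^2<\frac{\beta_1}{\alpha_2}.$$ Then for every $x\in\mathscr{H}$, $$C(S,T)\,\|x\|\le\Big(\sum_{k\in S^c}|\langle x,a_k\rangle|^2\Big)^{1/2}+\Big(\sum_{j\in T^c}|\langle x,b_j\rangle|^2\Big)^{1/2},$$ where $$C(S,T)=\Big(1-\Big(\tfrac{\alpha_2}{\beta_1}\Big)^{1/2}M(A^*,B)\,|S|^{1/2}|T|^{1/2}\Big)\Big(\max\Big\{\beta_1^{-1/2},\ \Big(1+\Big(\tfrac{\beta_2}{\beta_1}\Big)^{1/2}\Big)\alpha_1^{-1/2}\,m\,M(A^*,A)\Big\}\Big)^{-1}.$$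
   Context: A finite family $\{a_k\}_{k=1}^m$ is a frame of $\mathscr{H}$ with lower and upper frame bounds $0<\alpha_1\le\alpha_2$ if $\alpha_1\|x\|^2\le\sum_k|\langle x,a_k\rangle|^2\le\alpha_2\|x\|^2$ for all $x$. The canonical dual frame of $A$ is $A^*=\{a_k^*\}_{k=1}^m$ with $a_k^*=F^{-1}a_k$, where $F x=\sum_k\langle x,a_k\rangle a_k$ is the frame operator of $A$. For two families $U=\{u_k\}$, $V=\{v_j\}$, the coherence is $M(U,V)=\max_{k,j}|\langle u_k,v_j\rangle|$. $S^c$ and $T^c$ are the complements in $\{1,\dots,m\}$ and $\{1,\dots,n\}$. *)

From HB Require Import structures.
From mathcomp Require Import all_boot all_order all_algebra.
From mathcomp Require Import reals.
From mathcomp Require Import complex.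
Set Implicit Arguments.
Unset Strict Implicit.
Unset Printing Implicit Defensive.
Import Order.TTheory GRing.Theory Num.Theory.
Local Open Scope ring_scope.

(* The finite-dimensional complex Hilbert space H is modelled as C^d
   (column vectors 'cV[R[i]]_d), with R a realType, so R[i] is the
   field of complex numbers. *)

Section Frames.
Variable R : realType.
Local Notation C := R[i].

Definition cmod (z : C) : R := Num.sqrt (complex.Re z ^+ 2 + complex.Im z ^+ 2).

Definition ip (d : nat) (x y : 'cV[C]_d) : C :=
  \sum_(i < d) x i 0 * conjc (y i 0).

Definition hnorm (d : nat) (x : 'cV[C]_d) : R := Num.sqrt (complex.Re (ip x x)).

Definition is_frame (d m : nat) (a : 'I_m -> 'cV[C]_d) (al1 al2 : R) : Prop :=
  0 < al1 /\ al1 <= al2 /\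
  forall x : 'cV[C]_d,
    al1 * hnorm x ^+ 2 <= \sum_(k < m) cmod (ip x (a k)) ^+ 2 /\
    \sum_(k < m) cmod (ip x (a k)) ^+ 2 <= al2 * hnorm x ^+ 2.

Definition adjmx (p q : nat) (M : 'M[C]_(p, q)) : 'M[C]_(q, p) :=
  map_mx (@conjc R) M^T.

(* matrix of the frame operator F x = sum_k <x,a_k> a_k *)
Definition frame_op (d m : nat) (a : 'I_m -> 'cV[C]_d) : 'M[C]_d :=
  \sum_(k < m) (a k *m adjmx (a k)).

Definition dual_frame (d m : nat) (a : 'I_m -> 'cV[C]_d) : 'I_m -> 'cV[C]_d :=
  fun k => invmx (frame_op a) *m a k.

Definition coherence (d m n : nat) (u : 'I_m -> 'cV[C]_d) (v : 'I_n -> 'cV[C]_d) : R :=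
  \big[Num.max/0]_(k < m) \big[Num.max/0]_(j < n) cmod (ip (u k) (v j)).

End Frames.

(* Expand x in the canonical dual frame, x = x_S + x_{S^c} with
   x_P = sum_{k in P} <x,a_k> a_k^*.  By Cauchy-Schwarz and the upper frame
   bound of A, every |<x_S, b_j>| is at most M(A^*,B) |S|^{1/2} alpha_2^{1/2} ||x||,
   so the T-coefficients of x in B have l2-norm at most |T|^{1/2} times this
   plus beta_2^{1/2} ||x_{S^c}||.  In the same way the lower frame bound of A
   gives alpha_1^{1/2} ||x_{S^c}|| <= m M(A^*,A) (sum_{k in S^c} |<x,a_k>|^2)^{1/2}.
   Inserting both into the lower frame bound of B, split along T and T^c,
   bounds ||x|| by a multiple of itself plus the two tail sums, and solving
   for ||x|| gives the inequality. *)

From HB Require Import structures.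
From mathcomp Require Import all_boot all_order all_algebra.
From mathcomp Require Import reals complex.
From mathcomp Require Import ring lra.
Set Implicit Arguments.
Unset Strict Implicit.
Unset Printing Implicit Defensive.
Import Order.TTheory GRing.Theory Num.Theory.
Local Open Scope ring_scope.

Section L2Norm.
Variables (R : rcfType) (I : finType).
Implicit Types (P Q : {set I}) (f g : I -> R).

Definition l2norm P f : R := Num.sqrt (\sum_(i in P) f i ^+ 2).

Lemma l2norm_ge0 P f : 0 <= l2norm P f.
Proof. exact: sqrtr_ge0. Qed.

Lemma sqr_l2norm P f : l2norm P f ^+ 2 = \sum_(i in P) f i ^+ 2.
Proof. by rewrite sqr_sqrtr // sumr_ge0 // => i _; apply: sqr_ge0. Qed.

Lemma l2norm_le P f y :
  0 <= y -> \sum_(i in P) f i ^+ 2 <= y ^+ 2 -> l2norm P f <= y.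
Proof. by move=> y0 le_y; rewrite -(ger0_norm y0) -sqrtr_sqr ler_wsqrtr. Qed.

Lemma l2normT f : l2norm [set: I] f = Num.sqrt (\sum_i f i ^+ 2).
Proof. by rewrite /l2norm; under eq_bigl do rewrite in_setT. Qed.

Lemma sqr_sum_mul_le P f g :
  (\sum_(i in P) f i * g i) ^+ 2
  <= (\sum_(i in P) f i ^+ 2) * (\sum_(i in P) g i ^+ 2).
Proof.
set ff := \sum_(i in P) f i ^+ 2; set gg := \sum_(i in P) g i ^+ 2.
set fg := \sum_(i in P) f i * g i.
have row_sum i : \sum_(j in P) (f i * g j - f j * g i) ^+ 2
    = f i ^+ 2 * gg + g i ^+ 2 * ff - (f i * g i * fg) *+ 2.
  rewrite !mulr_sumr -sumrMnl -big_split -sumrB /=.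
  by apply: eq_bigr => j _; ring.
have lagrange : \sum_(i in P) \sum_(j in P) (f i * g j - f j * g i) ^+ 2
    = (ff * gg - fg ^+ 2) *+ 2.
  rewrite (eq_bigr _ (fun i _ => row_sum i)) sumrB big_split /= sumrMnl.
  by rewrite -!mulr_suml -/ff -/gg -/fg; ring.
have : 0 <= (ff * gg - fg ^+ 2) *+ 2.
  by rewrite -lagrange; do 2!(apply: sumr_ge0 => ? _); apply: sqr_ge0.
by rewrite pmulrn_lge0 // subr_ge0.
Qed.

Lemma sum_mul_le_l2norm P f g :
  \sum_(i in P) f i * g i <= l2norm P f * l2norm P g.
Proof.
rewrite /l2norm -sqrtrM; last by apply: sumr_ge0 => i _; apply: sqr_ge0.
apply: le_trans (ler_norm _) _; rewrite -sqrtr_sqr.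
by apply: ler_wsqrtr; apply: sqr_sum_mul_le.
Qed.

Lemma l2norm_cst P c : l2norm P (fun=> c) = Num.sqrt #|P|%:R * `|c|.
Proof.
by rewrite /l2norm sumr_const -[_ *+ _]mulr_natl sqrtrM ?ler0n // sqrtr_sqr.
Qed.

Lemma sum_le_card_l2norm P f :
  \sum_(i in P) f i <= Num.sqrt #|P|%:R * l2norm P f.
Proof.
have -> : \sum_(i in P) f i = \sum_(i in P) f i * 1.
  by apply: eq_bigr => i _; rewrite mulr1.
apply: le_trans (sum_mul_le_l2norm P f (fun=> 1)) _.
by rewrite l2norm_cst normr1 mulr1 mulrC.
Qed.

Lemma l2normD P f g :
  l2norm P (fun i => f i + g i) <= l2norm P f + l2norm P g.
Proof.
apply: l2norm_le; first by rewrite addr_ge0 ?l2norm_ge0.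
have fg_le := sum_mul_le_l2norm P f g.
under eq_bigr do rewrite sqrrD.
rewrite sqrrD !sqr_l2norm !big_split /=.
lra.
Qed.

Lemma le_l2norm P f g :
  (forall i, i \in P -> `|f i| <= g i) -> l2norm P f <= l2norm P g.
Proof.
move=> le_fg; apply: ler_wsqrtr; apply: ler_sum => i iP.
have g0 : 0 <= g i by apply: le_trans (le_fg i iP).
by rewrite -real_normK ?num_real // ler_sqr ?nnegrE // le_fg.
Qed.

Lemma l2norm_subset P Q f : P \subset Q -> l2norm P f <= l2norm Q f.
Proof.
move=> sPQ; apply: ler_wsqrtr.
rewrite [X in _ <= X](big_setID P) /= (setIidPr sPQ) lerDl.
by apply: sumr_ge0 => i _; apply: sqr_ge0.
Qed.

Lemma l2normT_le_split P f : l2norm [set: I] f <= l2norm P f + l2norm (~: P) f.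
Proof.
apply: l2norm_le; first by rewrite addr_ge0 ?l2norm_ge0.
rewrite sqrrD !sqr_l2norm (big_setID P) /= setTI setTD.
have := mulr_ge0 (l2norm_ge0 P f) (l2norm_ge0 (~: P) f).
lra.
Qed.

End L2Norm.

Lemma sqrtr_mul_sqr (R : rcfType) (c y : R) :
  0 <= c -> 0 <= y -> Num.sqrt (c * y ^+ 2) = Num.sqrt c * y.
Proof. by move=> c0 y0; rewrite sqrtrM // sqrtr_sqr ger0_norm. Qed.

Lemma ler_div_max_of_absorb (R : realFieldType) (k p q h u v : R) :
  0 < p -> 0 <= u -> 0 <= v -> h <= k * h + q * u + p * v ->
  (1 - k) / Num.max p q * h <= u + v.
Proof.
move=> p_gt0 u0 v0 le_h.
have max_gt0 : 0 < Num.max p q by rewrite lt_max p_gt0.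
rewrite mulrAC ler_pdivrMr //.
have : q * u <= Num.max p q * u by rewrite ler_wpM2r // le_max lexx orbT.
have : p * v <= Num.max p q * v by rewrite ler_wpM2r // le_max lexx.
lra.
Qed.

Section ComplexModulus.
Variable R : realType.
Implicit Types z w : R[i].

Lemma normC_cmod z : `|z| = (cmod z)%:C%C.
Proof. exact: normc_def. Qed.

Lemma cmod_ge0 z : 0 <= cmod z.
Proof. exact: sqrtr_ge0. Qed.

Lemma cmod0 : cmod (0 : R[i]) = 0.
Proof. by apply: complexI; rewrite -normC_cmod normr0. Qed.

Lemma cmodM z w : cmod (z * w) = cmod z * cmod w.
Proof. by apply: complexI; rewrite rmorphM /= -!normC_cmod normrM. Qed.

Lemma cmodD z w : cmod (z + w) <= cmod z + cmod w.
Proof. by rewrite -lecR rmorphD /= -!normC_cmod ler_normD. Qed.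

Lemma cmod_sum (I : Type) (r : seq I) (P : pred I) (F : I -> R[i]) :
  cmod (\sum_(i <- r | P i) F i) <= \sum_(i <- r | P i) cmod (F i).
Proof.
elim/big_rec2: _ => [|i s z _ le_zs]; first by rewrite cmod0.
by apply: le_trans (cmodD _ _) _; rewrite lerD2l.
Qed.

Lemma sqr_cmod z : (cmod z ^+ 2)%:C%C = z * conjc z.
Proof. by rewrite rmorphXn /= -normC_cmod sqr_normc. Qed.

Lemma cmod_eq0 z : cmod z = 0 -> z = 0.
Proof. by move=> z0; apply/eqP; rewrite -normr_eq0 normC_cmod z0. Qed.

End ComplexModulus.

Section InnerProduct.
Variables (R : realType) (d : nat).
Implicit Types x y v : 'cV[R[i]]_d.

Lemma ip_suml (I : Type) (r : seq I) (P : pred I) (F : I -> 'cV[R[i]]_d) y :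
  ip (\sum_(k <- r | P k) F k) y = \sum_(k <- r | P k) ip (F k) y.
Proof.
rewrite /ip exchange_big /=; apply: eq_bigr => i _.
by rewrite summxE mulr_suml.
Qed.

Lemma ip_scalel c x y : ip (c *: x) y = c * ip x y.
Proof. by rewrite /ip mulr_sumr; apply: eq_bigr => i _; rewrite mxE mulrA. Qed.

Lemma ip_addl x1 x2 y : ip (x1 + x2) y = ip x1 y + ip x2 y.
Proof. by rewrite /ip -big_split; apply: eq_bigr => i _; rewrite mxE mulrDl. Qed.

Lemma ip0l y : ip 0 y = 0.
Proof. by rewrite /ip big1 // => i _; rewrite mxE mul0r. Qed.

Lemma ip_conj x y : ip y x = conjc (ip x y).
Proof.
rewrite /ip rmorph_sum; apply: eq_bigr => i _.
by rewrite rmorphM /= conjcK mulrC.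
Qed.

Lemma adjmx_mul v x : adjmx v *m x = (ip x v)%:M.
Proof.
apply/matrixP => i j; rewrite !ord1 !mxE /= mulr1n.
by apply: eq_bigr => l _; rewrite !mxE mulrC.
Qed.

Lemma hnorm_ge0 x : 0 <= hnorm x.
Proof. exact: sqrtr_ge0. Qed.

Lemma hnorm_sqr x : hnorm x ^+ 2 = \sum_i cmod (x i 0) ^+ 2.
Proof.
have ipxx : ip x x = (\sum_i cmod (x i 0) ^+ 2)%:C%C.
  by rewrite rmorph_sum; apply: eq_bigr => i _; rewrite -sqr_cmod.
by rewrite /hnorm ipxx /= sqr_sqrtr // sumr_ge0 // => i _; apply: sqr_ge0.
Qed.

Lemma hnorm_eq0 x : hnorm x = 0 -> x = 0.
Proof.
move=> x0; apply/matrixP => i j; rewrite ord1 mxE; apply: cmod_eq0.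
have : \sum_i cmod (x i 0) ^+ 2 == 0 by rewrite -hnorm_sqr x0 expr0n.
rewrite psumr_eq0 => [/allP/(_ i (mem_index_enum i))/=|k _]; last exact: sqr_ge0.
by rewrite sqrf_eq0 => /eqP.
Qed.

End InnerProduct.

Section Frames.
Variables (R : realType) (d m : nat) (a : 'I_m -> 'cV[R[i]]_d).

Definition dual_expansion (P : {set 'I_m}) (x : 'cV[R[i]]_d) : 'cV[R[i]]_d :=
  \sum_(k in P) ip x (a k) *: dual_frame a k.

Lemma frame_opE x : frame_op a *m x = \sum_k ip x (a k) *: a k.
Proof.
rewrite /frame_op mulmx_suml; apply: eq_bigr => k _.
by rewrite -mulmxA adjmx_mul mul_mx_scalar.
Qed.

Lemma ip_frame_op x : ip (frame_op a *m x) x = (\sum_k cmod (ip x (a k)) ^+ 2)%:C%C.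
Proof.
rewrite frame_opE ip_suml rmorph_sum; apply: eq_bigr => k _.
by rewrite ip_scalel (ip_conj x) -sqr_cmod.
Qed.

Variables (al1 al2 : R).
Hypothesis fa : is_frame a al1 al2.

Lemma frame_op_unit : frame_op a \in unitmx.
Proof.
have [al1_gt0 [_ bounds]] := fa.
have frame_op_inj (x : 'cV[R[i]]_d) : frame_op a *m x = 0 -> x = 0.
  move=> Fx0; apply: hnorm_eq0.
  have coefs0 : \sum_k cmod (ip x (a k)) ^+ 2 = 0.
    by apply: complexI; rewrite -ip_frame_op Fx0 ip0l.
  have := (bounds x).1; rewrite coefs0 pmulr_rle0 // => x_le0.
  by apply/eqP; rewrite -sqrf_eq0 eq_le x_le0 sqr_ge0.
rewrite -unitmx_tr -row_free_unit; apply: inj_row_free => v vF0.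
apply: trmx_inj; rewrite trmx0; apply: frame_op_inj.
by rewrite -[frame_op a]trmxK -trmx_mul vF0 trmx0.
Qed.

Lemma dual_frame_expansion x : x = \sum_k ip x (a k) *: dual_frame a k.
Proof.
rewrite -{1}(mulKmx frame_op_unit x) frame_opE mulmx_sumr.
by apply: eq_bigr => k _; rewrite /dual_frame scalemxAr.
Qed.

Lemma dual_expansion_split P x : x = dual_expansion P x + dual_expansion (~: P) x.
Proof.
rewrite {1}(dual_frame_expansion x) (bigID (mem P)) /=; congr (_ + _).
by apply: eq_bigl => k; rewrite in_setC.
Qed.

Lemma frame_lower_l2norm x :
  Num.sqrt al1 * hnorm x <= l2norm [set: 'I_m] (fun k => cmod (ip x (a k))).
Proof.
have [al1_gt0 [_ bounds]] := fa.
rewrite l2normT -sqrtr_mul_sqr ?hnorm_ge0 ?(ltW al1_gt0) //.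
by apply: ler_wsqrtr; apply: (bounds x).1.
Qed.

Lemma frame_upper_l2norm P x :
  l2norm P (fun k => cmod (ip x (a k))) <= Num.sqrt al2 * hnorm x.
Proof.
have [al1_gt0 [al12 bounds]] := fa.
apply: le_trans (l2norm_subset _ (subsetT P)) _.
rewrite l2normT -sqrtr_mul_sqr ?hnorm_ge0 ?(ltW (lt_le_trans al1_gt0 al12)) //.
by apply: ler_wsqrtr; apply: (bounds x).2.
Qed.

End Frames.

Section Coherence.
Variables (R : realType) (d m n : nat).
Variables (u : 'I_m -> 'cV[R[i]]_d) (v : 'I_n -> 'cV[R[i]]_d).

Lemma coherence_ge0 : 0 <= coherence u v.
Proof. exact: bigmax_ge_id. Qed.

Lemma cmod_ip_le_coherence k j : cmod (ip (u k) (v j)) <= coherence u v.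
Proof.
apply: le_trans (le_bigmax _ _ k).
exact: (le_bigmax _ (fun j => cmod (ip (u k) (v j))) j).
Qed.

Lemma cmod_ip_sum_le_coherence (P : {set 'I_m}) (c : 'I_m -> R[i]) j :
  cmod (ip (\sum_(k in P) c k *: u k) (v j))
  <= coherence u v * (Num.sqrt #|P|%:R * l2norm P (fun k => cmod (c k))).
Proof.
rewrite ip_suml; apply: le_trans (cmod_sum _ _ _) _.
apply: (@le_trans _ _ (\sum_(k in P) coherence u v * cmod (c k))).
  apply: ler_sum => k _; rewrite ip_scalel cmodM mulrC.
  by rewrite ler_wpM2r ?cmod_ge0 ?cmod_ip_le_coherence.
by rewrite -mulr_sumr ler_wpM2l ?coherence_ge0 ?sum_le_card_l2norm.
Qed.

End Coherence.

Section Uncertainty.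
Variables (R : realType) (d m n : nat).
Variables (a : 'I_m -> 'cV[R[i]]_d) (b : 'I_n -> 'cV[R[i]]_d).
Variables (al1 al2 be1 be2 : R).
Hypotheses (fa : is_frame a al1 al2) (fb : is_frame b be1 be2).
Variables (S : {set 'I_m}) (T : {set 'I_n}) (x : 'cV[R[i]]_d).

Local Notation mu := (coherence (dual_frame a) b).
Local Notation nu := (coherence (dual_frame a) a).
Local Notation xSc := (dual_expansion a (~: S) x).
Local Notation U := (l2norm (~: S) (fun k => cmod (ip x (a k)))).
Local Notation V := (l2norm (~: T) (fun j => cmod (ip x (b j)))).

Lemma l2norm_coefs_T_le :
  l2norm T (fun j => cmod (ip x (b j)))
  <= Num.sqrt #|T|%:R * (mu * (Num.sqrt #|S|%:R * (Num.sqrt al2 * hnorm x)))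
     + Num.sqrt be2 * hnorm xSc.
Proof.
set c := mu * _.
have c_ge0 : 0 <= c by rewrite !mulr_ge0 ?coherence_ge0 ?sqrtr_ge0 ?hnorm_ge0.
have coef_le j : cmod (ip x (b j)) <= c + cmod (ip xSc (b j)).
  rewrite {1}(dual_expansion_split fa S x) ip_addl.
  apply: le_trans (cmodD _ _) _; rewrite lerD2r.
  apply: le_trans (cmod_ip_sum_le_coherence _ _ _ _ _) _.
  rewrite ler_wpM2l ?coherence_ge0 // ler_wpM2l ?sqrtr_ge0 //.
  exact: frame_upper_l2norm fa S x.
apply: le_trans (le_l2norm (g := fun j => c + cmod (ip xSc (b j))) _) _.
  by move=> j _; rewrite ger0_norm ?cmod_ge0 ?coef_le.
apply: le_trans (l2normD T (fun=> c) (fun j => cmod (ip xSc (b j)))) _.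
by rewrite l2norm_cst ger0_norm // lerD2l; apply: frame_upper_l2norm fb T xSc.
Qed.

Lemma hnorm_dual_expansion_compl_le : Num.sqrt al1 * hnorm xSc <= m%:R * nu * U.
Proof.
apply: le_trans (frame_lower_l2norm fa xSc) _.
have coef_le l : cmod (ip xSc (a l)) <= nu * (Num.sqrt m%:R * U).
  apply: le_trans (cmod_ip_sum_le_coherence _ _ _ _ _) _.
  rewrite ler_wpM2l ?coherence_ge0 // ler_wpM2r ?l2norm_ge0 //.
  rewrite ler_wsqrtr // ler_nat.
  by rewrite -[X in (_ <= X)%N](card_ord m) max_card.
apply: le_trans (le_l2norm (g := fun=> nu * (Num.sqrt m%:R * U)) _) _.
  by move=> l _; rewrite ger0_norm ?cmod_ge0 ?coef_le.
rewrite l2norm_cst cardsT card_ord ger0_norm; last first.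
  by rewrite !mulr_ge0 ?coherence_ge0 ?sqrtr_ge0 ?l2norm_ge0.
set s := Num.sqrt m%:R.
have sqr_s : s * s = m%:R by rewrite -expr2 sqr_sqrtr ?ler0n.
suff -> : m%:R * nu * U = s * (nu * (s * U)) by [].
by rewrite -sqr_s; ring.
Qed.

Lemma hnorm_le_uncertainty :
  hnorm x <= Num.sqrt (al2 / be1) * mu * Num.sqrt #|S|%:R * Num.sqrt #|T|%:R
               * hnorm x
             + (1 + Num.sqrt (be2 / be1)) * (Num.sqrt al1)^-1 * m%:R * nu * U
             + (Num.sqrt be1)^-1 * V.
Proof.
have [al1_gt0 [al12 _]] := fa; have [be1_gt0 [be12 _]] := fb.
have sa_gt0 : 0 < Num.sqrt al1 by rewrite sqrtr_gt0.
have sb_gt0 : 0 < Num.sqrt be1 by rewrite sqrtr_gt0.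
have xSc_le : hnorm xSc <= (Num.sqrt al1)^-1 * (m%:R * nu * U).
  by rewrite ler_pdivlMl // hnorm_dual_expansion_compl_le.
have scaled : Num.sqrt be1 * hnorm x
    <= Num.sqrt #|T|%:R * (mu * (Num.sqrt #|S|%:R * (Num.sqrt al2 * hnorm x)))
       + Num.sqrt be2 * ((Num.sqrt al1)^-1 * (m%:R * nu * U)) + V.
  apply: le_trans (frame_lower_l2norm fb x) _.
  apply: le_trans (l2normT_le_split T _) _; rewrite lerD2r.
  apply: le_trans l2norm_coefs_T_le _.
  by rewrite lerD2l; apply: ler_wpM2l (sqrtr_ge0 _) _ _ xSc_le.
have al2_gt0 := lt_le_trans al1_gt0 al12.
have be2_gt0 := lt_le_trans be1_gt0 be12.
rewrite (sqrtrM _ (ltW al2_gt0)) (sqrtrM _ (ltW be2_gt0)) (sqrtrV (ltW be1_gt0)).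
rewrite -(ler_pM2l sb_gt0); apply: le_trans scaled _.
(* Only the summand 1 of (1 + sqrt (be2 / be1)) is left over. *)
rewrite -subr_ge0.
rewrite (_ : _ - _ = Num.sqrt be1 * ((Num.sqrt al1)^-1 * (m%:R * nu * U))).
  rewrite mulr_ge0 ?sqrtr_ge0 // mulr_ge0 ?invr_ge0 ?sqrtr_ge0 //.
  by rewrite !mulr_ge0 ?ler0n ?coherence_ge0 ?l2norm_ge0.
by field; rewrite ?gt_eqF.
Qed.

End Uncertainty.

Theorem mainTheorem5 (R : realType) (d m n : nat)
  (a : 'I_m -> 'cV[R[i]]_d) (b : 'I_n -> 'cV[R[i]]_d)
  (al1 al2 be1 be2 : R)
  (hA : is_frame a al1 al2) (hB : is_frame b be1 be2)
  (S : {set 'I_m}) (T : {set 'I_n}) :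
  #|S|%:R * #|T|%:R * coherence (dual_frame a) b ^+ 2 < be1 / al2 ->
  forall x : 'cV[R[i]]_d,
    (1 - Num.sqrt (al2 / be1) * coherence (dual_frame a) b
           * Num.sqrt (#|S|%:R) * Num.sqrt (#|T|%:R))
    / Num.max ((Num.sqrt be1)^-1)
              ((1 + Num.sqrt (be2 / be1)) * (Num.sqrt al1)^-1 * m%:R
                 * coherence (dual_frame a) a)
    * hnorm x
    <= Num.sqrt (\sum_(k in ~: S) cmod (ip x (a k)) ^+ 2)
       + Num.sqrt (\sum_(j in ~: T) cmod (ip x (b j)) ^+ 2).
Proof.
(* The smallness hypothesis only makes the constant C(S,T) positive; the
   inequality itself holds for all S and T. *)
move=> _ x; have [be1_gt0 _] := hB.
apply: (ler_div_max_of_absorb _ _ _ (hnorm_le_uncertainty hA hB S T x)).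
- by rewrite invr_gt0 sqrtr_gt0.
- exact: sqrtr_ge0.
- exact: sqrtr_ge0.
Qed.
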